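(* Let $n\ge2$ and let $(V,\langle-,\ldots,-\rangle_n)$ be an alternating (resp. symmetric) $n$-linear space over a field $K$ with $V$ infinite-dimensional. Then $\langle-,\ldots,-\rangle_n$ is non-degenerate if and only if it is generic.
   Context: Let $\lozenge^{n-1}V$ be the exterior power $\bigwedge^{n-1}V$ in the alternating case and the symmetric power $\bigvee^{n-1}V$ in the symmetric case, and let $\langle-,-\rangle_2:(\lozenge^{n-1}V)\times V\to K$ be the induced bilinear form, $\langle\overline{v_1\otimes\cdots\otimes v_{n-1}},v\rangle_2=\langle v_1,\ldots,v_{n-1},v\rangle_n$ extended linearly. The form is non-degenerate if for every nonzero $t\in\lozenge^{n-1}V$ there is $w\in V$ with $\langle t,w\rangle_2\ne0$; it is generic if for every $m\in\mathbb{N}$, all linearly independent $t_1,\ldots,t_m\in\lozenge^{n-1}V$ and all $k_1,\ldots,k_m\in K$ there is $w\in V$ with $\langle t_i,w\rangle_2=k_i$ for all $i\le m$. *)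

From HB Require Import structures.
From mathcomp Require Import all_boot all_order all_algebra all_fingroup.
Set Implicit Arguments. Unset Strict Implicit. Unset Printing Implicit Defensive.
Import GRing.Theory.
Local Open Scope ring_scope.

Inductive nkind := Alt | Sym.

Section Defs.
Variables (K : fieldType) (V : lmodType K).

Definition upd (k : nat) (x : {ffun 'I_k -> V}) (i : 'I_k) (v : V)
  : {ffun 'I_k -> V} := [ffun j => if j == i then v else x j].

Definition nmultilinear (n : nat) (f : {ffun 'I_n -> V} -> K) : Prop :=
  forall (i : 'I_n) (x : {ffun 'I_n -> V}) (c : K) (u v : V),
    f (upd x i (c *: u + v)) = c * f (upd x i u) + f (upd x i v).

Definition nalternating (n : nat) (f : {ffun 'I_n -> V} -> K) : Prop :=
  forall (x : {ffun 'I_n -> V}) (i j : 'I_n), i != j -> x i = x j -> f x = 0.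

Definition nsymmetric (n : nat) (f : {ffun 'I_n -> V} -> K) : Prop :=
  forall (x : {ffun 'I_n -> V}) (s : 'S_n), f [ffun i => x (s i)] = f x.

Definition nlin_form (kd : nkind) (n : nat) (f : {ffun 'I_n -> V} -> K) : Prop :=
  nmultilinear f /\ (if kd is Alt then nalternating f else nsymmetric f).

Definition infinite_dim : Prop :=
  forall s : seq V, exists v : V,
    ~ exists c : 'I_(size s) -> K, v = \sum_(i < size s) c i *: s`_i.

(* ---- The power \lozenge^k V (exterior or nsymmetric power) ----
   An element is represented by a formal linear combination
   (a finite list of (coefficient, k-tuple of vectors)) of pure tensors;
   it is zero in \lozenge^k V iff its coefficient function on V^k lies in
   the span of the defining relations (multilinearity and alternation,
   resp. symmetry). *)
Definition formal (k : nat) := seq (K * {ffun 'I_k -> V}).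

Definition fcoef (k : nat) (t : formal k) (x : {ffun 'I_k -> V}) : K :=
  \sum_(p <- t) (if p.2 == x then p.1 else 0).

Inductive gen (kd : nkind) (k : nat) : formal k -> Prop :=
| gen_add (x : {ffun 'I_k -> V}) (i : 'I_k) (u v : V) :
    gen kd [:: (1, upd x i (u + v)); (-1, upd x i u); (-1, upd x i v)]
| gen_scale (x : {ffun 'I_k -> V}) (i : 'I_k) (c : K) (u : V) :
    gen kd [:: (1, upd x i (c *: u)); (- c, upd x i u)]
| gen_alt (x : {ffun 'I_k -> V}) (i j : 'I_k) :
    kd = Alt -> i != j -> x i = x j -> gen kd [:: (1, x)]
| gen_sym (x : {ffun 'I_k -> V}) (s : 'S_k) :
    kd = Sym -> gen kd [:: (1, [ffun i => x (s i)]); (-1, x)].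

Definition lz_zero (kd : nkind) (k : nat) (t : formal k) : Prop :=
  exists gs : seq (K * formal k),
    (forall p, p \in gs -> gen kd p.2) /\
    forall x, fcoef t x = \sum_(p <- gs) p.1 * fcoef p.2 x.

Definition lincomb (k m : nat) (a : 'I_m -> K) (ts : 'I_m -> formal k)
  : formal k :=
  flatten [seq [seq (a i * p.1, p.2) | p <- ts i] | i <- enum 'I_m].

Definition lz_lin_indep (kd : nkind) (k m : nat) (ts : 'I_m -> formal k)
  : Prop :=
  forall a : 'I_m -> K, lz_zero kd (lincomb a ts) -> forall i, a i = 0.

(* concatenation (v_1, ..., v_{n-1}, w) *)
Definition ext_tuple (n : nat) (x : {ffun 'I_n.-1 -> V}) (w : V)
  : {ffun 'I_n -> V} :=
  [ffun i : 'I_n => if insub (val i) : option 'I_n.-1 is Some j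
                    then x j else w].

(* the induced form <-,->_2 on (\lozenge^{n-1} V) x V *)
Definition pair2 (n : nat) (f : {ffun 'I_n -> V} -> K)
  (t : formal n.-1) (w : V) : K :=
  \sum_(p <- t) p.1 * f (ext_tuple p.2 w).

Definition nondegenerate_form (kd : nkind) (n : nat)
  (f : {ffun 'I_n -> V} -> K) : Prop :=
  forall t : formal n.-1, ~ lz_zero kd t -> exists w : V, pair2 f t w != 0.

Definition generic_form (kd : nkind) (n : nat)
  (f : {ffun 'I_n -> V} -> K) : Prop :=
  forall (m : nat) (ts : 'I_m -> formal n.-1) (ks : 'I_m -> K),
    lz_lin_indep kd ts ->
    exists w : V, forall i, pair2 f (ts i) w = ks i.

End Defs.

From HB Require Import structures.
From mathcomp Require Import all_boot all_order all_algebra all_fingroup.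
From Stdlib Require Import Classical.
Set Implicit Arguments. Unset Strict Implicit. Unset Printing Implicit Defensive.
Import GRing.Theory.
Local Open Scope ring_scope.

(* Non-degeneracy says that t |-> <t, ->_2 is injective on the power of V, so
   it maps linearly independent t_1, ..., t_m to linearly independent linear
   functionals on V; and finitely many linearly independent functionals are
   jointly onto K^m, since by induction they admit a dual family of vectors.
   Conversely, genericity for the single family (t) with value 1 gives
   non-degeneracy. Neither direction uses that V is infinite-dimensional. *)

Section FreeScalars.
Variables (K : fieldType) (V : lmodType K).

Definition free_scalars m (L : 'I_m -> {scalar V}) : Prop :=
  forall a : 'I_m -> K, (forall w, \sum_i a i * L i w = 0) -> forall i, a i = 0.

Definition dual_family m (L : 'I_m -> {scalar V}) (e : 'I_m -> V) : Prop :=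
  forall i j, L i (e j) = (i == j)%:R.

Lemma sum_unlift0 m (a : 'I_m -> K) (x : K) (F : 'I_m.+1 -> K) :
  \sum_i oapp a x (unlift ord0 i) * F i =
  x * F ord0 + \sum_j a j * F (lift ord0 j).
Proof. by rewrite big_ord_recl unlift_none; under eq_bigr do rewrite liftK. Qed.

Lemma dual_family_sum m (L : 'I_m -> {scalar V}) e (k : 'I_m -> K) i :
  dual_family L e -> L i (\sum_j k j *: e j) = k i.
Proof.
move=> dualLe; rewrite linear_sum (bigD1 i) //= linearZ /= dualLe eqxx mulr1.
rewrite big1 ?addr0 // => j /negbTE nji.
by rewrite linearZ /= dualLe eq_sym nji mulr0.
Qed.

Lemma free_scalars_lift0 m (L : 'I_m.+1 -> {scalar V}) :
  free_scalars L -> free_scalars (L \o lift ord0).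
Proof.
move=> freeL a vanish_a j.
have := freeL (fun i => oapp a 0 (unlift ord0 i)) _ (lift ord0 j).
rewrite liftK; apply=> w.
by rewrite sum_unlift0 mul0r add0r; apply: vanish_a.
Qed.

(* Projecting along a dual family [e] of the other functionals, [L ord0] must
   survive, otherwise it would be a combination of them. *)
Lemma free_dual_off_kernels m (L : 'I_m.+1 -> {scalar V}) (e : 'I_m -> V) :
  free_scalars L -> dual_family (L \o lift ord0) e ->
  exists e0, L ord0 e0 = 1 /\ forall j, L (lift ord0 j) e0 = 0.
Proof.
move=> freeL dual_e.
pose P w := w - \sum_j L (lift ord0 j) w *: e j.
have P_ker j w : L (lift ord0 j) (P w) = 0.
  by rewrite linearB /= (dual_family_sum _ _ dual_e) subrr.
have [w0 nz_w0] : exists w0, L ord0 (P w0) != 0.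
  apply: NNPP => no_w0.
  have all_ker w : L ord0 (P w) = 0.
    by apply/eqP; apply: contra_notT no_w0 => ?; exists w.
  pose a i := oapp (fun j => - L ord0 (e j)) 1 (unlift ord0 i).
  have vanish_a w : \sum_i a i * L i w = 0.
    rewrite sum_unlift0 mul1r -[RHS](all_ker w) linearB linear_sum /=.
    rewrite -sumrN; congr (_ + _); apply: eq_bigr => j _.
    by rewrite linearZ mulNr mulrC.
  by have := freeL a vanish_a ord0; rewrite /a unlift_none; apply/eqP/oner_neq0.
exists ((L ord0 (P w0))^-1 *: P w0); split; first by rewrite linearZ /= mulVf.
by move=> j; rewrite linearZ /= P_ker mulr0.
Qed.

Lemma dual_family_of_free m (L : 'I_m -> {scalar V}) :
  free_scalars L -> exists e, dual_family L e.
Proof.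
elim: m L => [|m IHm] L freeL; first by exists (fun=> 0) => -[].
have [e dual_e] := IHm _ (free_scalars_lift0 freeL).
have [e0 [Le0 Le0_ker]] := free_dual_off_kernels freeL dual_e.
exists (fun i => oapp (fun j => e j - L ord0 (e j) *: e0) e0 (unlift ord0 i)).
move=> i j; case: (unliftP ord0 j) => [j' ->|->] /=; rewrite ?liftK ?unlift_none.
  case: (unliftP ord0 i) => [i' ->|->]; rewrite ?linearB ?linearZ /=.
    by rewrite Le0_ker mulr0 subr0 (dual_e i' j') (inj_eq lift_inj).
  by rewrite Le0 mulr1 subrr.
case: (unliftP ord0 i) => [i' ->|->]; last by rewrite Le0 eqxx.
by rewrite Le0_ker.
Qed.

Lemma free_scalars_surj m (L : 'I_m -> {scalar V}) :
  free_scalars L -> forall k : 'I_m -> K, exists w, forall i, L i w = k i.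
Proof.
move=> /dual_family_of_free[e dual_e] k.
by exists (\sum_j k j *: e j) => i; apply: dual_family_sum.
Qed.

End FreeScalars.

Section InducedPairing.
Variables (K : fieldType) (V : lmodType K) (kd : nkind).

Lemma big_lincomb k m (a : 'I_m -> K) (ts : 'I_m -> formal V k)
    (G : {ffun 'I_k -> V} -> K) :
  \sum_(p <- lincomb a ts) p.1 * G p.2 =
  \sum_i a i * \sum_(p <- ts i) p.1 * G p.2.
Proof.
rewrite /lincomb big_flatten /= big_map big_enum /=.
apply: eq_bigr => i _; rewrite big_map big_distrr /=.
by apply: eq_bigr => p _; rewrite mulrA.
Qed.

Lemma fcoef_lincomb k m (a : 'I_m -> K) (ts : 'I_m -> formal V k) x :
  fcoef (lincomb a ts) x = \sum_i a i * fcoef (ts i) x.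
Proof.
have fcoefE (t : formal V k) : fcoef t x = \sum_(p <- t) p.1 * (p.2 == x)%:R.
  by apply: eq_bigr => p _; case: eqP; rewrite ?mulr1 ?mulr0.
rewrite fcoefE (big_lincomb a ts (fun y => (y == x)%:R)).
by under eq_bigr do rewrite -fcoefE.
Qed.

Lemma pair2_lincomb n (f : {ffun 'I_n -> V} -> K) m (a : 'I_m -> K) ts w :
  pair2 f (lincomb a ts) w = \sum_i a i * pair2 f (ts i) w.
Proof. exact: (big_lincomb a ts (fun y => f (ext_tuple y w))). Qed.

Lemma lz_lin_indep1 k (t : formal V k) :
  ~ lz_zero kd t -> lz_lin_indep kd (fun _ : 'I_1 => t).
Proof.
move=> nz_t a [gs [gen_gs t_gs]] i; rewrite ord1.
have [//|nz_a] := eqVneq (a ord0) 0; case: nz_t.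
exists [seq ((a ord0)^-1 * p.1, p.2) | p <- gs]; split.
  by move=> p /mapP[q q_gs ->]; exact: gen_gs q_gs.
move=> x; have := t_gs x; rewrite fcoef_lincomb big_ord1 big_map => t_x.
rewrite -[fcoef t x](mulKf nz_a) t_x big_distrr /=.
by apply: eq_bigr => p _; rewrite mulrA.
Qed.

Lemma ext_tuple_upd n (x : {ffun 'I_n -> V}) w :
  @ext_tuple K V n.+1 x w = upd (@ext_tuple K V n.+1 x 0) ord_max w.
Proof.
apply/ffunP => i; rewrite !ffunE; case: insubP => [j i_lt_n _ | i_ge_n].
  by rewrite ifF //; apply: contraTF i_lt_n => /eqP ->; rewrite ltnn.
rewrite ifT //; apply/eqP/val_inj/eqP.
by rewrite /= eqn_leq -ltnS ltn_ord leqNgt.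
Qed.

Variables (n : nat) (f : {ffun 'I_n.+1 -> V} -> K).
Hypothesis multi_f : nmultilinear f.

Lemma pair2_is_scalar (t : formal V n) : scalar (pair2 f t).
Proof.
move=> c u v; rewrite /pair2 big_distrr -big_split; apply: eq_bigr => p _ /=.
rewrite (ext_tuple_upd p.2 (c *: u + v)) (ext_tuple_upd p.2 u).
by rewrite (ext_tuple_upd p.2 v) multi_f mulrDr mulrCA.
Qed.

Definition pair2_scalar (t : formal V n) : {scalar V} :=
  HB.pack (pair2 f t) (GRing.isLinear.Build K V K *%R _ (pair2_is_scalar t)).

Lemma nondegenerate_free m (ts : 'I_m -> formal V n) :
  nondegenerate_form kd f -> lz_lin_indep kd ts ->
  free_scalars (pair2_scalar \o ts).
Proof.
move=> nondeg_f indep_ts a vanish_a; apply: indep_ts.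
apply: NNPP => /nondeg_f[w].
by rewrite pair2_lincomb (vanish_a w) eqxx.
Qed.

End InducedPairing.

Theorem lemma2p5 (K : fieldType) (V : lmodType K) (kd : nkind) (n : nat)
  (f : {ffun 'I_n -> V} -> K) :
  (2 <= n)%N -> infinite_dim V -> nlin_form kd f ->
  (nondegenerate_form kd f <-> generic_form kd f).
Proof.
move=> n_ge2 _ [multi_f _]; case: n n_ge2 f multi_f => [|n] // _ f multi_f.
split=> [nondeg_f m ts ks indep_ts | generic_f t nz_t].
  have free_ts := nondegenerate_free (multi_f := multi_f) nondeg_f indep_ts.
  exact: free_scalars_surj free_ts ks.
have [w /(_ ord0) t_w] := generic_f 1%N (fun=> t) (fun=> 1) (lz_lin_indep1 nz_t).
by exists w; rewrite t_w oner_neq0.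
Qed.
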